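(* If $n$ is a non-negative integer, then $$\sum_{k = 1}^n \sum_{j = 0}^{k - 1} \frac{2^{2j}}{k - j} \binom{2(n - j)}{n - j} = 2^{2n + 1} + \left(H_n - 2\right)(2n + 1)\binom{2n}{n}$$ and $$\sum_{k = 1}^n \sum_{j = 0}^{k - 1} \frac{2^{2j}}{2k - 2j - 1} \binom{2(n - j)}{n - j} = \left(O_{n + 1} - 1 \right)(2n + 1)\binom{2n}{n}.$$
   Context: $H_n=\sum_{m=1}^n\frac1m$ and $O_n=\sum_{m=1}^n\frac1{2m-1}$. Empty sums are zero. *)

From mathcomp Require Import all_boot all_order all_algebra.
Set Implicit Arguments. Unset Strict Implicit. Unset Printing Implicit Defensive.
Import GRing.Theory Num.Theory.
Local Open Scope ring_scope.

Definition harm (n : nat) : rat := \sum_(1 <= m < n.+1) (m%:R)^-1.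
Definition oharm (n : nat) : rat := \sum_(1 <= m < n.+1) ((2 * m - 1)%N%:R)^-1.

(** Swapping the order of summation turns both double sums into convolutions
    [\sum_(j < n) 4^j h(n - j) C(2(n - j), n - j)] with [h = H] resp. [h = O].
    Such a convolution [S n] is characterised by [S 0 = 0] and
    [S (n + 1) = h(n + 1) C(2n + 2, n + 1) + 4 S n], so it suffices to check
    that both closed forms satisfy this recurrence, which follows from
    [(n + 1) C(2n + 2, n + 1) = 2 (2n + 1) C(2n, n)]. *)

From mathcomp Require Import all_boot all_order all_algebra.
From mathcomp Require Import ring zify.
Import GRing.Theory Num.Theory.
Local Open Scope ring_scope.

Lemma sum_triangle_subn (V : nmodType) (F : nat -> nat -> V) n :
  \sum_(1 <= k < n.+1) \sum_(0 <= j < k) F j (k - j)%N =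
  \sum_(0 <= j < n) \sum_(1 <= i < (n - j).+1) F j i.
Proof.
elim: n => [|n IHn]; first by rewrite !big_geq.
rewrite big_nat_recr //= IHn [RHS]big_nat_recr //= [X in _ + X]big_nat_recr //=.
rewrite addrA -big_split subSnn big_nat1; congr (_ + _).
by apply: eq_big_nat => j /andP[_ ltjn]; rewrite subSn ?(ltnW ltjn) // [RHS]big_nat_recr.
Qed.

Lemma sum_expr_convS (R : pzSemiRingType) (x : R) (g : nat -> R) n :
  \sum_(0 <= j < n.+1) x ^+ j * g (n.+1 - j)%N
    = g n.+1 + x * \sum_(0 <= j < n) x ^+ j * g (n - j)%N.
Proof.
rewrite big_nat_recl // expr0 mul1r subn0 mulr_sumr.
by congr (_ + _); apply: eq_bigr => j _; rewrite subSS exprS mulrA.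
Qed.

Lemma mul_central_binS n :
  (n.+1 * 'C(2 * n.+1, n.+1) = 2 * (2 * n + 1) * 'C(2 * n, n))%N.
Proof.
have diag := mul_bin_diag (2 * n.+1) n.
have down := mul_bin_down (2 * n + 1) n.
rewrite (_ : (2 * n.+1).-1 = 2 * n + 1)%N in diag; last by lia.
rewrite (_ : (2 * n + 1).-1 = 2 * n)%N in down; last by lia.
rewrite (_ : (2 * n + 1 - n = n.+1)%N) in down; last by lia.
by rewrite -diag -!mulnA down.
Qed.

Lemma harmS n : harm n.+1 = harm n + (n.+1)%:R^-1.
Proof. by rewrite /harm big_nat_recr. Qed.

Lemma oharmS n : oharm n.+1 = oharm n + ((2 * n + 1)%N%:R)^-1.
Proof. by rewrite /oharm big_nat_recr //=; congr (_ + (_%:R)^-1); lia. Qed.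

Definition central_bin (m : nat) : rat := ('C(2 * m, m))%:R.

Lemma central_binS n :
  central_bin n.+1 = 2%:R * (2 * n + 1)%N%:R * central_bin n / (n.+1)%:R.
Proof.
rewrite /central_bin -!natrM -mul_central_binS [(n.+1 * _)%N]mulnC natrM.
by rewrite mulfK // pnatr_eq0.
Qed.

Lemma harm_conv_central_bin n :
  \sum_(0 <= j < n) 2%:R ^+ (2 * j) * (harm (n - j) * central_bin (n - j))
    = 2%:R ^+ (2 * n + 1) + (harm n - 2%:R) * (2 * n + 1)%N%:R * central_bin n.
Proof.
under eq_bigr do rewrite exprM.
elim: n => [|n IHn]; first by rewrite big_geq // /harm big_geq // /central_bin; ring.
rewrite (@sum_expr_convS _ _ (fun m => harm m * central_bin m)) IHn central_binS harmS.
rewrite (_ : 2 * n.+1 + 1 = 2 * n + 1 + 2)%N; last by lia.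
rewrite !(natrD, natrM) !exprD.
by field; rewrite nat1r pnatr_eq0.
Qed.

Lemma oharm_conv_central_bin n :
  \sum_(0 <= j < n) 2%:R ^+ (2 * j) * (oharm (n - j) * central_bin (n - j))
    = (oharm n.+1 - 1) * (2 * n + 1)%N%:R * central_bin n.
Proof.
under eq_bigr do rewrite exprM.
elim: n => [|n IHn]; first by rewrite big_geq // /oharm big_nat1 /= invr1 subrr !mul0r.
rewrite (@sum_expr_convS _ _ (fun m => oharm m * central_bin m)) IHn central_binS.
rewrite (oharmS n.+1) (_ : 2 * n.+1 + 1 = 2 * n + 1 + 2)%N; last by lia.
rewrite !(natrD, natrM).
by field; rewrite nat1r -natrM natr1 -natrD !pnatr_eq0 addn2.
Qed.

Theorem proposition19 (n : nat) :
  \sum_(1 <= k < n.+1) \sum_(0 <= j < k)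
      (2%:R ^+ (2 * j) / (k - j)%N%:R * ('C(2 * (n - j), n - j))%:R : rat)
    = 2%:R ^+ (2 * n + 1) + (harm n - 2%:R) * (2 * n + 1)%N%:R * ('C(2 * n, n))%:R
  /\
  \sum_(1 <= k < n.+1) \sum_(0 <= j < k)
      (2%:R ^+ (2 * j) / (2 * k - 2 * j - 1)%N%:R * ('C(2 * (n - j), n - j))%:R : rat)
    = (oharm n.+1 - 1) * (2 * n + 1)%N%:R * ('C(2 * n, n))%:R.
Proof.
split.
  rewrite (@sum_triangle_subn _ (fun j i => 2%:R ^+ (2 * j) / i%:R * central_bin (n - j))).
  rewrite -harm_conv_central_bin; apply: eq_bigr => j _.
  by rewrite /harm mulr_suml mulr_sumr; apply: eq_bigr => i _; rewrite mulrA mulrAC.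
under eq_bigr do under eq_bigr do rewrite -mulnBr.
rewrite (@sum_triangle_subn _ (fun j i => 2%:R ^+ (2 * j) / (2 * i - 1)%N%:R * central_bin (n - j))).
rewrite -oharm_conv_central_bin; apply: eq_bigr => j _.
by rewrite /oharm mulr_suml mulr_sumr; apply: eq_bigr => i _; rewrite mulrA mulrAC.
Qed.
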